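(* Under Assumptions A1 and A2, for every compact set $B\subset(0,\infty)^2$, $$\lim_{t\to\infty}\sup_{(x,y)\in B}\Big|\frac{\widehat C_v\big(\overline F(xt),\overline F(yt)\big)}{\big(\overline F(t)\big)^{\kappa-1}\ell\big(\overline F(t)\big)}-\tau_v\big(x^{-\alpha},y^{-\alpha}\big)\Big|=0.$$
   Context: $\mathrm{RV}_\gamma$: $f(tx)/f(t)\to x^\gamma$ as $t\to\infty$; slowly varying at $0$: $\ell(st)/\ell(t)\to1$ as $t\downarrow0$. Assumption A1: $X,Y$ nonnegative continuous random variables with common distribution function $F$, $\overline F=1-F\in\mathrm{RV}_{-\alpha}$, $\alpha>0$. The survival copula $\widehat C$ satisfies $\Pr(X>x,Y>y)=\widehat C(\overline F(x),\overline F(y))$; $\widehat C_u,\widehat C_v$ its partial derivatives, $\tau_v=\partial\tau/\partial v$. Assumption A2: $\widehat C$ symmetric, twice differentiable on $[0,1]^2$; there exist $\kappa\in[1,2]$, $\ell$ slowly varying at $0$, $\tau\not\equiv0$ continuously differentiable on $[0,\infty)^2$ with $\lim_{t\downarrow0}\widehat C(ut,vt)/(t^\kappa\ell(t))=\tau(u,v)$ for all $u,v\ge0$; $\widehat C_u(u,v)$ nonincreasing in $u$, $\widehat C_v(u,v)$ nonincreasing in $v$. *)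

From HB Require Import structures.
From mathcomp Require Import all_boot all_order all_algebra.
From mathcomp Require Import all_classical all_reals all_analysis.
Set Implicit Arguments. Unset Strict Implicit. Unset Printing Implicit Defensive.
Import Order.TTheory GRing.Theory Num.Theory.
Import numFieldNormedType.Exports.
Local Open Scope classical_set_scope.
Local Open Scope ring_scope.

Section Defs.
Variable R : realType.

Definition Fbar (F : R -> R) (x : R) : R := 1 - F x.

Definition regularly_varying (gamma : R) (f : R -> R) : Prop :=
  forall x : R, 0 < x -> (f (t * x) / f t) @[t --> +oo] --> x `^ gamma.

Definition slowly_varying_at0 (l : R -> R) : Prop :=
  (\forall t \near 0^'+, 0 < l t) /\
  forall s : R, 0 < s -> (l (s * t) / l t) @[t --> 0^'+] --> (1 : R).

Definition partial_u (f : R * R -> R) (p : R * R) : R := 'D_((1 : R), (0 : R)) f p.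
Definition partial_v (f : R * R -> R) (p : R * R) : R := 'D_((0 : R), (1 : R)) f p.

Definition unit_square : set (R * R) :=
  [set p | 0 <= p.1 <= 1 /\ 0 <= p.2 <= 1].
Definition quadrant : set (R * R) := [set p | 0 <= p.1 /\ 0 <= p.2].
Definition open_quadrant : set (R * R) := [set p | 0 < p.1 /\ 0 < p.2].

Definition twice_differentiable_on (A : set (R * R)) (f : R * R -> R) : Prop :=
  forall p, A p ->
    [/\ differentiable f p, differentiable (partial_u f) p
      & differentiable (partial_v f) p].

Definition C1_on (A : set (R * R)) (f : R * R -> R) : Prop :=
  [/\ forall p, A p -> differentiable f p,
      {within A, continuous (partial_u f)}
    & {within A, continuous (partial_v f)}].

End Defs.
Arguments unit_square R : clear implicits.
Arguments quadrant R : clear implicits.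
Arguments open_quadrant R : clear implicits.

From HB Require Import structures.
From mathcomp Require Import all_boot all_order all_algebra.
From mathcomp Require Import all_classical all_reals all_analysis.
From mathcomp Require Import ring lra.
Import Order.TTheory GRing.Theory Num.Theory.
Import numFieldNormedType.Exports.
Local Open Scope classical_set_scope.
Local Open Scope ring_scope.

Lemma powR_continuous {R : realType} (g : R) {x : R} : 0 < x -> {for x, continuous (fun y : R => y `^ g)}.
Proof.
move=> x_gt0; apply: differentiable_continuous; apply/derivable1_diffP.
by apply: derivable_powR; rewrite in_itv /= andbT.
Qed.

Section PartialDerivatives.
Context {R : realType}.

Lemma partial_u_is_derive {f : R * R -> R} {u w : R} : differentiable f (u, w) ->
  is_derive u 1 (fun h => f (h, w)) (partial_u f (u, w)).
Proof.
move=> df.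
have E : (fun h : R => h^-1 *: (((fun h0 => f (h0, w)) \o shift u) (h *: 1) - f (u, w)))
  = (fun h : R => h^-1 *: ((f \o shift (u, w)) (h *: ((1:R), (0:R))) - f (u, w))).
  apply/funext => h /=; congr (_ *: (f _ - _)).
  change ((h%:A + u, w) = (h *: (1:R) + u, h *: (0:R) + w)); by rewrite scaler0 add0r.
have dv : derivable f (u, w) ((1:R), (0:R)) by exact: diff_derivable.
split; first by rewrite /derivable E.
by rewrite /partial_u /derive E.
Qed.

Lemma partial_v_is_derive {f : R * R -> R} {u w : R} : differentiable f (u, w) ->
  is_derive w 1 (fun h => f (u, h)) (partial_v f (u, w)).
Proof.
move=> df.
have E : (fun h : R => h^-1 *: (((fun h0 => f (u, h0)) \o shift w) (h *: 1) - f (u, w)))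
  = (fun h : R => h^-1 *: ((f \o shift (u, w)) (h *: ((0:R), (1:R))) - f (u, w))).
  apply/funext => h /=; congr (_ *: (f _ - _)).
  change ((u, h%:A + w) = (h *: (0:R) + u, h *: (1:R) + w)); by rewrite scaler0 add0r.
have dv : derivable f (u, w) ((0:R), (1:R)) by exact: diff_derivable.
split; first by rewrite /derivable E.
by rewrite /partial_v /derive E.
Qed.

End PartialDerivatives.

Lemma within_quadrant_continuous {R : realType} (g : R * R -> R) (a b : R) :
  0 < a -> 0 < b -> {within quadrant R, continuous g} -> {for (a, b), continuous g}.
Proof.
move=> a_gt0 b_gt0 /subspace_continuousP /(_ (a, b)) g_cont.
have ab_interior : (quadrant R)° (a, b).
  apply/nbhs_ballP; exists (Num.min a b); first by rewrite /= lt_min a_gt0.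
  move=> [u v] [/= /ltr_distlBl ua /ltr_distlBl vb].
  by have := le_refl (Num.min a b); rewrite le_min => /andP[? ?]; split => /=; lra.
by move: g_cont; rewrite (within_interior ab_interior); apply; split; exact: ltW.
Qed.

Lemma MVT_closed {R : realType} (f df : R -> R) (p q : R) : p < q ->
  (forall x, p <= x <= q -> is_derive x 1 f (df x)) ->
  exists2 c, p < c < q & f q - f p = df c * (q - p).
Proof.
move=> pq f_derive.
have fd x : x \in `]p, q[ -> is_derive x 1 f (df x).
  by rewrite in_itv /= => /andP[px xq]; apply: f_derive; rewrite !ltW.
have fc : {within `[p, q], continuous f}.
  apply: derivable_within_continuous => x; rewrite in_itv /= => /andP[px xq].
  by have [] := f_derive x (ltac:(by rewrite px xq)).
by have [c] := MVT pq fd fc; rewrite in_itv /=; exists c.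
Qed.

Lemma slope_near_deriv {R : realType} (g dg : R -> R) (b eps : R) : 0 < eps ->
  (\forall x \near b, is_derive (x : R) 1 g (dg x)) -> {for b, continuous dg} ->
  exists2 d, 0 < d & forall p q, b - d < p -> p < q -> q < b + d ->
    `|(g q - g p) / (q - p) - dg b| < eps.
Proof.
move=> eps_gt0 g_derive dg_cont.
have : \forall x \near b, is_derive (x : R) 1 g (dg x) /\ `|dg b - dg x| < eps.
  exact: filterI g_derive (cvgr_dist_lt _ _ dg_cont _ eps_gt0).
move=> /nbhs_ballP[d d_gt0 near_b]; exists d => // p q bp pq qb.
have in_ball x : p <= x <= q -> ball b d x.
  by move=> /andP[px xq]; rewrite /ball /= ltr_distlC; apply/andP; split; lra.
have [c /andP[pc cq] ->] := MVT_closed g dg p q pq (fun x hx => (near_b x (in_ball x hx)).1).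
rewrite mulfK ?subr_eq0 ?gt_eqF // distrC.
by apply: (near_b c (in_ball c _)).2; rewrite !ltW.
Qed.

Section NonincreasingDerivative.
Context {R : realType} {f df : R -> R} {lo hi : R}.
Hypothesis f_derive : forall x, lo <= x <= hi -> is_derive x 1 f (df x).
Hypothesis df_nonincr : forall x y, lo <= x -> x <= y -> y <= hi -> df y <= df x.

Let MVT_sub (p q : R) : lo <= p -> p < q -> q <= hi ->
  exists2 c, p < c < q & f q - f p = df c * (q - p).
Proof. by move=> lop pq qhi; apply: (MVT_closed f df p q) pq _ => x px; apply: f_derive; lra. Qed.

Lemma deriv_le_slope (p q z : R) : lo <= p -> p < q -> q <= z -> z <= hi ->
  df z <= (f q - f p) / (q - p).
Proof.
move=> lop pq qz zhi; have [c /andP[pc cq] ->] := MVT_sub _ _ lop pq (le_trans qz zhi).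
by rewrite mulfK ?subr_eq0 ?gt_eqF //; apply: df_nonincr; lra.
Qed.

Lemma slope_le_deriv (z p q : R) : lo <= z -> z <= p -> p < q -> q <= hi ->
  (f q - f p) / (q - p) <= df z.
Proof.
move=> loz zp pq qhi; have [c /andP[pc cq] ->] := MVT_sub _ _ (le_trans loz zp) pq qhi.
by rewrite mulfK ?subr_eq0 ?gt_eqF //; apply: df_nonincr; lra.
Qed.

Lemma le_chord_extension (p0 p1 z : R) : lo <= p0 -> p0 < p1 -> p1 <= z -> z <= hi ->
  f z <= f p1 + (z - p1) * ((f p1 - f p0) / (p1 - p0)).
Proof.
move=> lop0 p01 p1z zhi; have [<-|p1z'] := eqVneq p1 z; first by rewrite subrr mul0r addr0.
have {}p1z : p1 < z by rewrite lt_neqAle p1z' p1z.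
have [c /andP[p1c cz] E] := MVT_sub _ _ (ltac:(lra) : lo <= p1) p1z zhi.
have dc : df c <= (f p1 - f p0) / (p1 - p0) by apply: deriv_le_slope; lra.
have : df c * (z - p1) <= (z - p1) * ((f p1 - f p0) / (p1 - p0)).
  by rewrite mulrC ler_wpM2l // subr_ge0 ltW.
lra.
Qed.

Lemma ge_between (L p1 z p2 : R) : lo <= p1 -> p1 <= z -> z <= p2 -> p2 <= hi ->
  L <= f p1 -> L <= f p2 -> L <= f z.
Proof.
move=> lop1 p1z zp2 p2hi Lp1 Lp2.
have [<-|p1z'] := eqVneq p1 z; first by [].
have [->|zp2'] := eqVneq z p2; first by [].
have {}p1z : p1 < z by rewrite lt_neqAle p1z' p1z.
have {}zp2 : z < p2 by rewrite lt_neqAle zp2' zp2.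
have [c1 /andP[p1c1 c1z] E1] := MVT_sub _ _ lop1 p1z (ltac:(lra) : z <= hi).
have [c2 /andP[zc2 c2p2] E2] := MVT_sub _ _ (ltac:(lra) : lo <= z) zp2 p2hi.
have c12 : df c2 <= df c1 by apply: df_nonincr; lra.
have [dc1|dc1] := leP 0 (df c1).
  have : 0 <= df c1 * (z - p1) by rewrite mulr_ge0 // subr_ge0 ltW.
  lra.
have : df c2 * (p2 - z) <= 0 by rewrite mulr_le0_ge0 ?subr_ge0 ?(ltW zp2) //; lra.
lra.
Qed.

(* Concavity bounds f between the minimum of two values below and the chord
   through two values above; the factor 5 = 1 + 2 * 2 comes from the chord. *)
Lemma three_point_bound (p0 p1 p2 q T z : R) :
  lo <= p0 -> p0 < p1 -> p1 <= q -> q <= p2 -> p2 <= hi -> q - p1 <= 2 * (p1 - p0) ->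
  `|f p0 - T| <= z -> `|f p1 - T| <= z -> `|f p2 - T| <= z -> `|f q - T| <= 5 * z.
Proof.
move=> lop0 p01 p1q qp2 p2hi qp1 + + +; rewrite !ler_distl => /andP[h0 h0'] /andP[h1 h1'] /andP[h2 h2'].
have lo_q : T - z <= f q by apply: (ge_between _ p1 _ p2); lra.
have up_q := le_chord_extension _ _ _ lop0 p01 p1q (le_trans qp2 p2hi).
have lam0 : 0 <= (q - p1) / (p1 - p0) by rewrite divr_ge0; lra.
have lam2 : (q - p1) / (p1 - p0) <= 2 by rewrite ler_pdivrMr; lra.
have : (q - p1) * ((f p1 - f p0) / (p1 - p0)) = (q - p1) / (p1 - p0) * (f p1 - f p0).
  by rewrite mulrA mulrAC.
move: ((q - p1) / (p1 - p0)) lam0 lam2 => lam lam0 lam2 E.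
have : lam * (f p1 - f p0) <= 4 * z by nra.
by move=> ?; apply/andP; split; lra.
Qed.

End NonincreasingDerivative.

Lemma dist_divr_le {R : realFieldType} (x y z D : R) : 0 < D ->
  (`|x / D - y| <= z) = (`|x - y * D| <= z * D).
Proof.
move=> D_gt0; have -> : x / D - y = (x - y * D) / D by field; exact: lt0r_neq0.
by rewrite normrM normfV (gtr0_norm D_gt0) ler_pdivrMr.
Qed.

Lemma dist_quotients_le {R : realFieldType} (g1 g2 t1 t2 r e : R) : 0 < r ->
  `|g1 - t1| <= r * e / 8 -> `|g2 - t2| <= r * e / 8 ->
  `|(g2 - g1) / r - (t2 - t1) / r| <= e / 4.
Proof.
move=> r_gt0 h1 h2; rewrite -mulrBl normrM normfV (gtr0_norm r_gt0) ler_pdivrMr //.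
have -> : g2 - g1 - (t2 - t1) = (g2 - t2) - (g1 - t1) by ring.
by apply: le_trans (ler_normB _ _) _; lra.
Qed.

Lemma dist_le_sandwich {R : realFieldType} {Q L U T1 T2 c m e : R} :
  L <= Q <= U -> `|U - T1| <= e / 4 -> `|L - T2| <= e / 4 ->
  `|T1 - c| < e / 4 -> `|T2 - c| < e / 4 -> `|c - m| < e / 4 -> `|Q - m| <= e.
Proof.
move=> /andP[LQ QU]; rewrite !ler_distl !ltr_distl.
move=> /andP[? ?] /andP[? ?] /andP[? ?] /andP[? ?] /andP[? ?].
by apply/andP; split; lra.
Qed.

Section SurvivalFunction.
Context {R : realType} {d : measure_display} {T : measurableType d}.
Context {P : probability T R} {X : {RV P >-> R}} {F : R -> R}.
Hypothesis X_cdf : forall x, P [set w | X w <= x] = (F x)%:E.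

Let X_le_measurable (z : R) : measurable [set w | X w <= z].
Proof.
have := measurable_funPTI X (measurable_itv `]-oo, z]).
by congr measurable; apply/seteqP; split => w /=; rewrite in_itv.
Qed.

Lemma Fbar_nonincr (x y : R) : x <= y -> Fbar F y <= Fbar F x.
Proof.
move=> xy; rewrite /Fbar lerD2l lerN2 -lee_fin -!X_cdf.
by apply: le_measure; rewrite ?inE // => w /= /le_trans; apply.
Qed.

Lemma Fbar_ge0 (x : R) : 0 <= Fbar F x.
Proof. by rewrite /Fbar subr_ge0 -lee_fin -X_cdf probability_le1. Qed.

End SurvivalFunction.


Section RegularVariation.
Context {R : realType} {Fb : R -> R} {alpha : R}.
Hypothesis Fb_nonincr : forall x y, x <= y -> Fb y <= Fb x.
Hypothesis Fb_ge0 : forall x, 0 <= Fb x.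
Hypothesis alpha_gt0 : 0 < alpha.
Hypothesis Fb_rv : regularly_varying (- alpha) Fb.

Lemma powR2_Nalpha_lt1 : 2 `^ (- alpha) < 1 :> R.
Proof.
rewrite /powR (negbTE (_ : (2:R) != 0)) // expR_lt1.
by rewrite mulNr oppr_lt0 mulr_gt0 // ln_gt0 // ltr1n.
Qed.

Lemma Fbar_gt0_near : \forall t \near +oo, 0 < Fb t.
Proof.
have : \forall t \near +oo, 0 < Fb (t * 2) / Fb t.
  by apply: cvgr_gt _ (Fb_rv 2 (ltr0Sn _ _)) _ _; rewrite powR_gt0.
apply: filterS => t ratio_gt0; rewrite lt_neqAle Fb_ge0 andbT eq_sym.
by apply/eqP => Fbt0; move: ratio_gt0; rewrite Fbt0 invr0 mulr0 ltxx.
Qed.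

Lemma Fbar_double_le (q : R) : 2 `^ (- alpha) < q ->
  \forall t \near +oo, Fb (t * 2) <= q * Fb t.
Proof.
move=> q_gt; have ratio_lt : \forall t \near +oo, Fb (t * 2) / Fb t < q.
  exact: cvgr_lt _ (Fb_rv 2 (ltr0Sn _ _)) _ q_gt.
near=> t; have Fbt_gt0 : 0 < Fb t by near: t; exact: Fbar_gt0_near.
by rewrite -ler_pdivrMr // ltW //; near: t.
Unshelve. all: by end_near.
Qed.

(* Iterating [Fbar_double_le] gives geometric decay along t * 2 ^ n; then use
   monotonicity. *)
Lemma Fbar_cvg0 : Fb t @[t --> +oo] --> 0.
Proof.
pose q := (1 + 2 `^ (- alpha)) / 2.
have [q_gt0 q_lt1] : 0 < q /\ q < 1.
  by rewrite /q; have := powR2_Nalpha_lt1; have := @powR_gt0 _ 2 (- alpha) (ltr0Sn _ _); split; lra.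
have [M [_ HM]] : \forall t \near +oo, Fb (t * 2) <= q * Fb t.
  by apply: Fbar_double_le; rewrite /q; have := powR2_Nalpha_lt1; lra.
pose t0 := `|M| + 1.
have t0_gt0 : 0 < t0 by rewrite /t0 ltr_wpDl.
have Fb_geom n : Fb (t0 * 2 ^+ n) <= q ^+ n * Fb t0.
  elim: n => [|n IH]; first by rewrite !expr0 mulr1 mul1r.
  rewrite exprSr mulrA (le_trans (HM _ _)) // ?exprS -?mulrA ?ler_pM2l //.
  rewrite (lt_le_trans (ltr_pwDr ltr01 (ler_norm M))) // ler_peMr ?(ltW t0_gt0) //.
  by rewrite exprn_ege1 // ler1n.
apply/cvgrPdist_lt => e e0.
have geom_small : \forall n \near \oo, q ^+ n * Fb t0 < e.
  apply: cvgr_lt (_ : _ @ \oo --> 0) _ e0.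
  rewrite -(mul0r (Fb t0)); apply: cvgM; last exact: cvg_cst.
  by apply: cvg_expr; rewrite gtr0_norm.
near \oo => n.
near=> t; rewrite sub0r normrN ger0_norm //.
apply: le_lt_trans (Fb_nonincr (t0 * 2 ^+ n) t _) (le_lt_trans (Fb_geom n) _).
  by near: t; apply: nbhs_pinfty_ge; exact: num_real.
by near: n.
Unshelve. all: by end_near.
Qed.

Lemma Fbar_cvg0_right : Fb t @[t --> +oo] --> 0^'+.
Proof.
move=> A A0; have {}A0 : \forall x \near 0, 0 < x -> A x by [].
suff : \forall t \near +oo, A (Fb t) by [].
near=> t; have Fbt_gt0 : 0 < Fb t by near: t; exact: Fbar_gt0_near.
by move: Fbt_gt0; near: t; exact: Fbar_cvg0 _ A0.
Unshelve. all: by end_near.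
Qed.

Lemma Fbar_ratio_unif (x0 dt : R) : 0 < x0 -> 0 < dt ->
  \forall rho \near 0^'+, \forall t \near +oo, forall x, ball x0 rho x ->
    `|Fb (x * t) / Fb t - x0 `^ (- alpha)| <= dt.
Proof.
move=> x0_gt0 dt_gt0.
have [d d_gt0 pow_near] : exists2 d, 0 < d &
    forall y, ball x0 d y -> `|x0 `^ (- alpha) - y `^ (- alpha)| < dt / 2.
  apply/nbhs_ballP; have dt2_gt0 : 0 < dt / 2 by lra.
  exact: cvgr_dist_lt _ _ (powR_continuous (- alpha) x0_gt0) _ dt2_gt0.
near=> rho.
have rho_gt0 : 0 < rho by near: rho; exact: nbhs_right_gt.
have rho_lt : rho < Num.min x0 d by near: rho; apply: nbhs_right_lt; rewrite lt_min x0_gt0.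
move: rho_lt; rewrite lt_min => /andP[rho_x0 rho_d].
have lower : x0 `^ (- alpha) - dt / 2 < (x0 + rho) `^ (- alpha).
  have : ball x0 d (x0 + rho).
    by rewrite /ball /= opprD addrA subrr sub0r normrN gtr0_norm.
  by move=> /pow_near; rewrite ltr_distlC => /andP[].
have upper : (x0 - rho) `^ (- alpha) < x0 `^ (- alpha) + dt / 2.
  have : ball x0 d (x0 - rho) by rewrite /ball /= opprB addrC subrK gtr0_norm.
  by move=> /pow_near; rewrite ltr_distlC => /andP[].
have ratio_lo : \forall t \near +oo, x0 `^ (- alpha) - dt / 2 < Fb (t * (x0 + rho)) / Fb t.
  by apply: cvgr_gt _ (Fb_rv _ _) _ lower; lra.
have ratio_up : \forall t \near +oo, Fb (t * (x0 - rho)) / Fb t < x0 `^ (- alpha) + dt / 2.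
  by apply: cvgr_lt _ (Fb_rv _ _) _ upper; lra.
near=> t => x; rewrite /ball /= ltr_distlC => /andP[x_lo x_up].
have t_gt0 : 0 < t by near: t; apply: nbhs_pinfty_gt; exact: num_real.
have Fbt_gt0 : 0 < Fb t by near: t; exact: Fbar_gt0_near.
have Fb_le : Fb (t * (x0 + rho)) <= Fb (x * t).
  by apply: Fb_nonincr; rewrite [x * t]mulrC ler_pM2l //; lra.
have Fb_ge : Fb (x * t) <= Fb (t * (x0 - rho)).
  by apply: Fb_nonincr; rewrite [x * t]mulrC ler_pM2l //; lra.
have Fbt_inv_ge0 : 0 <= (Fb t)^-1 by rewrite invr_ge0 ltW.
have := ler_wpM2r Fbt_inv_ge0 Fb_le; have := ler_wpM2r Fbt_inv_ge0 Fb_ge.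
have : x0 `^ (- alpha) - dt / 2 < Fb (t * (x0 + rho)) / Fb t by near: t.
have : Fb (t * (x0 - rho)) / Fb t < x0 `^ (- alpha) + dt / 2 by near: t.
by rewrite ler_distl => *; apply/andP; split; lra.
Unshelve. all: by end_near.
Qed.

End RegularVariation.

Section ScaledCopula.
Context {R : realType} {C tau : R * R -> R} {l : R -> R} {kappa : R}.

Definition Cscaled (s u w : R) := C (u * s, w * s) / (s `^ kappa * l s).

Hypothesis C_diff : forall u v : R, 0 <= u <= 1 -> 0 <= v <= 1 -> differentiable C (u, v).
Hypothesis Cu_nonincr : forall u1 u2 v : R, 0 <= u1 -> u1 <= u2 -> u2 <= 1 -> 0 <= v <= 1 ->
  partial_u C (u2, v) <= partial_u C (u1, v).
Hypothesis Cv_nonincr : forall u v1 v2 : R, 0 <= u <= 1 -> 0 <= v1 -> v1 <= v2 -> v2 <= 1 ->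
  partial_v C (u, v2) <= partial_v C (u, v1).
Hypothesis kappa_gt0 : 0 < kappa.
Hypothesis l_gt0 : \forall s \near 0^'+, 0 < l s.
Hypothesis C_tau : forall u v : R, 0 <= u -> 0 <= v -> Cscaled s u v @[s --> 0^'+] --> tau (u, v).
Hypothesis tau_diff : forall u v : R, 0 <= u -> 0 <= v -> differentiable tau (u, v).

Lemma tau_u_continuous (a w : R) : 0 <= a -> 0 <= w ->
  {for a, continuous (fun u => tau (u, w))}.
Proof.
move=> a_ge0 w_ge0; have [+ _] := partial_u_is_derive (tau_diff _ _ a_ge0 w_ge0).
by move=> /derivable1_diffP /differentiable_continuous.
Qed.

Lemma Cscaled_three_point (s a dl a' w T z : R) :
  0 < s -> 0 < l s -> 0 < dl -> 2 * dl < a -> (a + dl) * s <= 1 -> 0 <= w -> w * s <= 1 ->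
  `|a' - a| <= dl -> `|Cscaled s (a - 2 * dl) w - T| <= z ->
  `|Cscaled s (a - dl) w - T| <= z -> `|Cscaled s (a + dl) w - T| <= z ->
  `|Cscaled s a' w - T| <= 5 * z.
Proof.
move=> s_gt0 ls_gt0 dl_gt0 dl_a as_le1 w_ge0 ws_le1.
rewrite ler_distl => /andP[a'_lo a'_hi].
have D_gt0 : 0 < s `^ kappa * l s by rewrite mulr_gt0 // powR_gt0.
rewrite /Cscaled !dist_divr_le // -mulrA.
have ws_range : 0 <= w * s <= 1 by rewrite mulr_ge0 ?(ltW s_gt0) ?ws_le1.
have f_derive (x : R) : 0 <= x <= 1 ->
    is_derive x 1 (fun u => C (u, w * s)) (partial_u C (x, w * s)).
  by move=> x_range; apply: partial_u_is_derive; apply: C_diff.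
have df_nonincr (x y : R) : 0 <= x -> x <= y -> y <= 1 ->
    partial_u C (y, w * s) <= partial_u C (x, w * s).
  by move=> *; apply: Cu_nonincr.
apply: (three_point_bound f_derive df_nonincr) => //.
- by rewrite mulr_ge0 ?ltW //; lra.
- by rewrite ltr_pM2r //; lra.
- by rewrite ler_pM2r.
- by rewrite ler_pM2r.
- by rewrite -!mulrBl mulrA ler_pM2r //; lra.
Qed.

(* The concavity of [C] in its first argument upgrades the pointwise limit
   [C_tau] at three nearby points to a limit uniform in [a']. *)
Lemma Cscaled_unif (a w eta : R) : 0 < a -> 0 < w -> 0 < eta ->
  \forall dl \near 0^'+, \forall s \near 0^'+, forall a', `|a' - a| <= dl ->
    `|Cscaled s a' w - tau (a, w)| <= eta.
Proof.
move=> a_gt0 w_gt0 eta_gt0; have eta10_gt0 : 0 < eta / 10 by lra.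
have [d d_gt0 tau_near] : exists2 d, 0 < d &
    forall u, ball a d u -> `|tau (a, w) - tau (u, w)| < eta / 10.
  apply/nbhs_ballP.
  exact: cvgr_dist_lt _ _ (tau_u_continuous _ _ (ltW a_gt0) (ltW w_gt0)) _ eta10_gt0.
near=> dl.
have dl_gt0 : 0 < dl by near: dl; exact: nbhs_right_gt.
have : dl < Num.min (a / 3) (d / 3).
  by near: dl; apply: nbhs_right_lt; rewrite lt_min !divr_gt0.
rewrite lt_min => /andP[dl_a dl_d].
have close u : a - 2 * dl <= u <= a + dl ->
    \forall s \near 0^'+, `|Cscaled s u w - tau (a, w)| <= eta / 5.
  move=> /andP[u_lo u_hi]; have u_ge0 : 0 <= u by lra.
  have : ball a d u by rewrite /ball /= ltr_distlC; apply/andP; split; lra.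
  move=> /tau_near; rewrite ltr_distlC => /andP[tau_lo tau_hi].
  apply: filterS (cvgr_dist_lt _ _ (C_tau _ _ u_ge0 (ltW w_gt0)) _ eta10_gt0) => s.
  by rewrite ltr_distlC ler_distl => /andP[? ?]; apply/andP; split; lra.
near=> s => a' a'_near.
have s_gt0 : 0 < s by near: s; exact: nbhs_right_gt.
have s_a : s <= (a + dl)^-1 by near: s; apply: nbhs_right_le; rewrite invr_gt0; lra.
have s_w : s <= w^-1 by near: s; apply: nbhs_right_le; rewrite invr_gt0.
have -> : eta = 5 * (eta / 5) by field.
apply: (@Cscaled_three_point s a dl a' w) => //.
- by near: s.
- lra.
- by rewrite -ler_pdivlMl ?mulr1 //; lra.
- exact: ltW.
- by rewrite -ler_pdivlMl ?mulr1.
- by near: s; apply: close; lra.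
- by near: s; apply: close; lra.
- by near: s; apply: close; lra.
Unshelve. all: by end_near.
Qed.

Lemma Cscaled_slope (s a w1 w2 r : R) : 0 < s -> 0 < l s -> w2 - w1 = r -> r != 0 ->
  (Cscaled s a w2 - Cscaled s a w1) / r =
  (C (a * s, w2 * s) - C (a * s, w1 * s)) / (w2 * s - w1 * s) / (s `^ (kappa - 1) * l s).
Proof.
move=> s_gt0 ls_gt0 <- r_neq0.
have pow_neq0 : s `^ (kappa - 1) != 0 by rewrite gt_eqF // powR_gt0.
rewrite /Cscaled -(mulr_powRB1 (ltW s_gt0) kappa_gt0) -mulrBl.
have s_neq0 := lt0r_neq0 s_gt0; have ls_neq0 := lt0r_neq0 ls_gt0.
by field; rewrite ls_neq0 pow_neq0 -mulrBl mulf_neq0 //; apply/and5P.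
Qed.

Lemma partial_v_Cscaled_between (s a b b0 r : R) :
  0 < s -> 0 < l s -> 0 <= a * s <= 1 -> 0 < r -> 2 * r < b0 -> (b0 + 2 * r) * s <= 1 ->
  `|b - b0| <= r ->
  (Cscaled s a (b0 + 2 * r) - Cscaled s a (b0 + r)) / r
    <= partial_v C (a * s, b * s) / (s `^ (kappa - 1) * l s)
    <= (Cscaled s a (b0 - r) - Cscaled s a (b0 - 2 * r)) / r.
Proof.
move=> s_gt0 ls_gt0 as_range r_gt0 r_b0 b0s_le1; rewrite ler_distl => /andP[b_lo b_hi].
have D_inv_gt0 : 0 < (s `^ (kappa - 1) * l s)^-1 by rewrite invr_gt0 mulr_gt0 // powR_gt0.
have f_derive (x : R) : 0 <= x <= 1 ->
    is_derive x 1 (fun v => C (a * s, v)) (partial_v C (a * s, x)).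
  by move=> x_range; apply: partial_v_is_derive; apply: C_diff.
have df_nonincr (x y : R) : 0 <= x -> x <= y -> y <= 1 ->
    partial_v C (a * s, y) <= partial_v C (a * s, x).
  by move=> *; apply: Cv_nonincr.
have r_neq0 := lt0r_neq0 r_gt0.
rewrite (Cscaled_slope s a (b0 + r) (b0 + 2 * r) r) ?(Cscaled_slope s a (b0 - 2 * r) (b0 - r) r) //; try ring.
rewrite !ler_pM2r //; apply/andP; split.
- apply: (slope_le_deriv f_derive df_nonincr).
  + by rewrite mulr_ge0 ?ltW //; lra.
  + by rewrite ler_pM2r //; lra.
  + by rewrite ltr_pM2r //; lra.
  + exact: b0s_le1.
- apply: (deriv_le_slope f_derive df_nonincr).
  + by rewrite mulr_ge0 ?ltW //; lra.
  + by rewrite ltr_pM2r //; lra.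
  + by rewrite ler_pM2r //; lra.
  + by apply: le_trans b0s_le1; rewrite ler_pM2r //; lra.
Qed.

End ScaledCopula.
Arguments Cscaled {R} C l kappa s u w.

Section LocalUniformLimit.
Context {R : realType} {Fb : R -> R} {alpha : R} {C tau : R * R -> R} {l : R -> R} {kappa : R}.
Hypothesis Fb_nonincr : forall x y, x <= y -> Fb y <= Fb x.
Hypothesis Fb_ge0 : forall x, 0 <= Fb x.
Hypothesis alpha_gt0 : 0 < alpha.
Hypothesis Fb_rv : regularly_varying (- alpha) Fb.
Hypothesis C_diff : forall u v : R, 0 <= u <= 1 -> 0 <= v <= 1 -> differentiable C (u, v).
Hypothesis Cu_nonincr : forall u1 u2 v : R, 0 <= u1 -> u1 <= u2 -> u2 <= 1 -> 0 <= v <= 1 ->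
  partial_u C (u2, v) <= partial_u C (u1, v).
Hypothesis Cv_nonincr : forall u v1 v2 : R, 0 <= u <= 1 -> 0 <= v1 -> v1 <= v2 -> v2 <= 1 ->
  partial_v C (u, v2) <= partial_v C (u, v1).
Hypothesis kappa_gt0 : 0 < kappa.
Hypothesis l_gt0 : \forall s \near 0^'+, 0 < l s.
Hypothesis C_tau : forall u v : R, 0 <= u -> 0 <= v ->
  Cscaled C l kappa s u v @[s --> 0^'+] --> tau (u, v).
Hypothesis tau_diff : forall u v : R, 0 <= u -> 0 <= v -> differentiable tau (u, v).
Hypothesis tau_v_cont : {within quadrant R, continuous (partial_v tau)}.

Lemma tau_v_slopes_near (a b eps : R) : 0 < a -> 0 < b -> 0 < eps ->
  \forall r \near 0^'+,
    `|(tau (a, b - r) - tau (a, b - 2 * r)) / r - partial_v tau (a, b)| < eps /\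
    `|(tau (a, b + 2 * r) - tau (a, b + r)) / r - partial_v tau (a, b)| < eps.
Proof.
move=> a_gt0 b_gt0 eps_gt0.
have tau_derive : \forall v \near b, is_derive (v : R) 1 (fun v => tau (a, v)) (partial_v tau (a, v)).
  near=> v; apply: partial_v_is_derive; apply: tau_diff; first exact: ltW.
  by apply: ltW; near: v; exact: lt_nbhsr.
have [d d_gt0 slope_near] := slope_near_deriv _ _ b _ eps_gt0 tau_derive
  (continuous_comp (cvg_pair (cvg_cst _) cvg_id)
    (within_quadrant_continuous _ _ _ a_gt0 b_gt0 tau_v_cont)).
near=> r.
have r_gt0 : 0 < r by near: r; exact: nbhs_right_gt.
have r_d : r < d / 2 by near: r; apply: nbhs_right_lt; rewrite divr_gt0.
split.
- have := slope_near (b - 2 * r) (b - r).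
  by rewrite (_ : b - r - (b - 2 * r) = r); [apply; lra | ring].
- have := slope_near (b + r) (b + 2 * r).
  by rewrite (_ : b + 2 * r - (b + r) = r); [apply; lra | ring].
Unshelve. all: by end_near.
Qed.

Lemma partial_v_tau_powR_continuous (p0 : R * R) : 0 < p0.1 -> 0 < p0.2 ->
  {for p0, continuous (fun p : R * R => partial_v tau (p.1 `^ (- alpha), p.2 `^ (- alpha)))}.
Proof.
move=> x_gt0 y_gt0.
have fst_cont : (fst : R * R -> R) @ p0 --> p0.1 by exact: cvg_fst.
have snd_cont : (snd : R * R -> R) @ p0 --> p0.2 by exact: cvg_snd.
apply: (continuous_comp (f := fun p : R * R => (p.1 `^ (- alpha), p.2 `^ (- alpha)))).
  apply: (@cvg_pair _ _ _ _ (nbhs (p0.1 `^ (- alpha))) (nbhs (p0.2 `^ (- alpha)))).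
  - exact: cvg_comp _ _ fst_cont (powR_continuous (- alpha) x_gt0).
  - exact: cvg_comp _ _ snd_cont (powR_continuous (- alpha) y_gt0).
by apply: within_quadrant_continuous tau_v_cont; rewrite powR_gt0.
Qed.

Let near_Fb {Q : set R} : (\forall s \near 0^'+, Q s) -> \forall t \near +oo, Q (Fb t).
Proof. exact: (Fbar_cvg0_right Fb_nonincr Fb_ge0 alpha_gt0 Fb_rv). Qed.

Lemma partial_v_C_ratio_near (xs ys e : R) : 0 < xs -> 0 < ys -> 0 < e ->
  \forall p \near (xs, ys) & t \near +oo,
    `|partial_v C (Fb (p.1 * t), Fb (p.2 * t)) / (Fb t `^ (kappa - 1) * l (Fb t))
      - partial_v tau (p.1 `^ (- alpha), p.2 `^ (- alpha))| <= e.
Proof.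
move=> xs_gt0 ys_gt0 e_gt0; have e4_gt0 : 0 < e / 4 by lra.
have [a0 a0E a0_gt0] : exists2 a0, xs `^ (- alpha) = a0 & 0 < a0.
  by exists (xs `^ (- alpha)); rewrite ?powR_gt0.
have [b0 b0E b0_gt0] : exists2 b0, ys `^ (- alpha) = b0 & 0 < b0.
  by exists (ys `^ (- alpha)); rewrite ?powR_gt0.
have s_small : \forall s \near 0^'+, forall x, x <= 2 * (a0 + b0) -> x * s <= 1.
  near=> s; have s_gt0 : 0 < s by near: s; exact: nbhs_right_gt.
  have s_le : s <= (2 * (a0 + b0))^-1.
    by near: s; apply: nbhs_right_le; rewrite invr_gt0 mulr_gt0 // addr_gt0.
  move=> x x_le; apply: le_trans (ler_wpM2r (ltW s_gt0) x_le) _.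
  by rewrite mulrC -ler_pdivlMr ?div1r // mulr_gt0 // addr_gt0.
near (0 : R)^'+ => r.
have r_gt0 : 0 < r by near: r; exact: nbhs_right_gt.
have r_b0 : r < b0 / 4 by near: r; apply: nbhs_right_lt; rewrite divr_gt0.
have [r_b0' b0_le] : 2 * r < b0 /\ b0 + 2 * r <= 2 * (a0 + b0) by split; lra.
have re8_gt0 : 0 < r * e / 8 by rewrite divr_gt0 // mulr_gt0.
near (0 : R)^'+ => dl.
have dl_gt0 : 0 < dl by near: dl; exact: nbhs_right_gt.
have dl_a0 : dl < a0 by near: dl; exact: nbhs_right_lt.
have a_range a : `|a - a0| <= dl -> 0 <= a /\ a <= 2 * (a0 + b0).
  by rewrite ler_distl => /andP[? ?]; split; lra.
have [slope_lo slope_hi] :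
    `|(tau (a0, b0 - r) - tau (a0, b0 - 2 * r)) / r - partial_v tau (a0, b0)| < e / 4 /\
    `|(tau (a0, b0 + 2 * r) - tau (a0, b0 + r)) / r - partial_v tau (a0, b0)| < e / 4.
  by near: r; exact: tau_v_slopes_near.
have unif : \forall s \near 0^'+, forall w, w \in [:: b0 - 2 * r; b0 - r; b0 + r; b0 + 2 * r] ->
    forall a', `|a' - a0| <= dl -> `|Cscaled C l kappa s a' w - tau (a0, w)| <= r * e / 8.
  near: dl; near=> dl; near=> s => w; rewrite !inE => /or4P[] /eqP ->; near: s; near: dl;
    by apply: Cscaled_unif => //; lra.
near (0 : R)^'+ => rho.
have rho_gt0 : 0 < rho by near: rho; exact: nbhs_right_gt.
have ratio_x : \forall t \near +oo, forall x, ball xs rho x -> `|Fb (x * t) / Fb t - a0| <= dl.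
  by near: rho; rewrite -a0E; exact: Fbar_ratio_unif.
have ratio_y : \forall t \near +oo, forall y, ball ys rho y -> `|Fb (y * t) / Fb t - b0| <= r.
  by near: rho; rewrite -b0E; exact: Fbar_ratio_unif.
near=> p t.
have [px py] : ball (xs, ys) rho p by apply: (near (near_ball _ _ rho_gt0) p).
have target : `|partial_v tau (a0, b0) - partial_v tau (p.1 `^ (- alpha), p.2 `^ (- alpha))| < e / 4.
  rewrite -a0E -b0E.
  by apply: (near (cvgr_dist_lt _ _ (partial_v_tau_powR_continuous (xs, ys) xs_gt0 ys_gt0) _ e4_gt0) p).
have s_gt0 : 0 < Fb t by apply: (near (Fbar_gt0_near Fb_ge0 Fb_rv) t).
have ls_gt0 : 0 < l (Fb t) by apply: (near (near_Fb l_gt0) t).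
have scaled_le1 : forall x, x <= 2 * (a0 + b0) -> x * Fb t <= 1.
  by apply: (near (near_Fb s_small) t).
have unif_t : forall w, w \in [:: b0 - 2 * r; b0 - r; b0 + r; b0 + 2 * r] ->
    forall a', `|a' - a0| <= dl -> `|Cscaled C l kappa (Fb t) a' w - tau (a0, w)| <= r * e / 8.
  by apply: (near (near_Fb unif) t).
have a_near : `|Fb (p.1 * t) / Fb t - a0| <= dl by apply: (near ratio_x t).
have b_near : `|Fb (p.2 * t) / Fb t - b0| <= r by apply: (near ratio_y t).
rewrite -[Fb (p.1 * t)](divfK (lt0r_neq0 s_gt0)) -[Fb (p.2 * t)](divfK (lt0r_neq0 s_gt0)).
move: (Fb (p.1 * t) / Fb t) (Fb (p.2 * t) / Fb t) a_near b_near => a b a_near b_near.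
have [a_ge0 a_le] := a_range a a_near.
have as_range : 0 <= a * Fb t <= 1 by rewrite mulr_ge0 ?(ltW s_gt0) ?scaled_le1.
have between := partial_v_Cscaled_between C_diff Cv_nonincr kappa_gt0 _ _ _ _ _ s_gt0 ls_gt0 as_range
  r_gt0 r_b0' (scaled_le1 _ b0_le) b_near.
apply: (dist_le_sandwich between _ _ slope_lo slope_hi target).
- by apply: dist_quotients_le; rewrite // unif_t ?inE ?eqxx ?orbT.
- by apply: dist_quotients_le; rewrite // unif_t ?inE ?eqxx ?orbT.
Unshelve. all: by end_near.
Qed.

End LocalUniformLimit.

Theorem mainTheorem10 (R : realType) (d : measure_display) (T : measurableType d)
  (P : probability T R) (X Y : {RV P >-> R}) (F : R -> R) (alpha : R)
  (C : R * R -> R) (kappa : R) (l : R -> R) (tau : R * R -> R) :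
  (* Assumption A1 *)
  (forall w, 0 <= X w) -> (forall w, 0 <= Y w) ->
  (forall x, P [set w | X w <= x] = (F x)%:E) ->
  (forall x, P [set w | Y w <= x] = (F x)%:E) ->
  continuous F ->
  0 < alpha -> regularly_varying (- alpha) (Fbar F) ->
  (forall x y, P [set w | x < X w /\ y < Y w] = (C (Fbar F x, Fbar F y))%:E) ->
  (* Assumption A2 *)
  (forall u v, unit_square R (u, v) -> C (u, v) = C (v, u)) ->
  twice_differentiable_on (unit_square R) C ->
  1 <= kappa <= 2 ->
  slowly_varying_at0 l ->
  C1_on (quadrant R) tau ->
  (exists p, quadrant R p /\ tau p != 0) ->
  (forall u v, 0 <= u -> 0 <= v ->
     (C (u * t, v * t) / (t `^ kappa * l t)) @[t --> 0^'+] --> tau (u, v)) ->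
  (forall u1 u2 v, 0 <= u1 -> u1 <= u2 -> u2 <= 1 -> 0 <= v <= 1 ->
     partial_u C (u2, v) <= partial_u C (u1, v)) ->
  (forall u v1 v2, 0 <= u <= 1 -> 0 <= v1 -> v1 <= v2 -> v2 <= 1 ->
     partial_v C (u, v2) <= partial_v C (u, v1)) ->
  (* conclusion: uniform convergence on every compact B in (0,oo)^2,
     i.e. sup_B |...| -> 0 as t -> +oo *)
  forall B : set (R * R), compact B -> B `<=` open_quadrant R ->
  forall e : R, 0 < e ->
  \forall t \near +oo, forall p, B p ->
    `| partial_v C (Fbar F (p.1 * t), Fbar F (p.2 * t))
         / ((Fbar F t) `^ (kappa - 1) * l (Fbar F t))
       - partial_v tau (p.1 `^ (- alpha), p.2 `^ (- alpha)) | <= e.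
Proof.
move=> _ _ X_cdf _ _ alpha_gt0 Fb_rv _ _ C_twice kappa_range [l_gt0 _] [tau_diff _ tau_v_cont]
  _ C_tau Cu_nonincr Cv_nonincr B B_compact B_pos e e_gt0.
have C_diff (u v : R) : 0 <= u <= 1 -> 0 <= v <= 1 -> differentiable C (u, v).
  by move=> u_range v_range; have [] := C_twice (u, v) (conj u_range v_range).
have kappa_gt0 : 0 < kappa by case/andP: kappa_range => ? _; lra.
have cover := (compact_near_coveringP B).1 B_compact.
apply: cover => -[xs ys] /B_pos[/= xs_gt0 ys_gt0].
apply: (partial_v_C_ratio_near (Fbar_nonincr X_cdf) (Fbar_ge0 X_cdf) alpha_gt0 Fb_rv
  C_diff Cu_nonincr Cv_nonincr kappa_gt0 l_gt0 C_tau _ tau_v_cont) => //.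
by move=> u v u_ge0 v_ge0; apply: tau_diff; split.
Qed.
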